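(* Let $\mathrm{M}$ be a simple matroid on a finite set $E$, let $\mathcal{G}$ be a building set of its lattice of flats, and let $e\in E$. Then the set \[ \mathcal{G}\setminus e=\{S\in\mathcal{L}(\mathrm{M}\setminus e):\operatorname{cl}_{\mathrm{M}}(S)\in\mathcal{G}\} \] is a building set of the lattice of flats $\mathcal{L}(\mathrm{M}\setminus e)$ of the deletion $\mathrm{M}\setminus e$.
   Context: Flats are ordered by inclusion, $\hat0=\varnothing$, join $F\vee G=\operatorname{cl}(F\cup G)$. A building set of a geometric lattice $\mathcal{L}$ is $\mathcal{G}\subseteq\mathcal{L}\setminus\{\hat0\}$ such that for every $F\neq\hat0$, with $\max\mathcal{G}_{\leqslant F}$ the set of maximal elements of $\{G\in\mathcal{G}:G\leqslant F\}$, the join map $\prod_{G\in\max\mathcal{G}_{\leqslant F}}[\hat0,G]\to[\hat0,F]$ is a poset isomorphism. *)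

From mathcomp Require Import all_boot.
Set Implicit Arguments. Unset Strict Implicit. Unset Printing Implicit Defensive.

(* A matroid on a finite ground set E (a subset of a finType T), given by its
   rank function r (only values on subsets of E matter). *)
Definition is_matroid (T : finType) (E : {set T}) (r : {set T} -> nat) : Prop :=
  [/\ forall X : {set T}, X \subset E -> r X <= #|X|,
      forall X Y : {set T}, X \subset Y -> Y \subset E -> r X <= r Y &
      forall X Y : {set T}, X \subset E -> Y \subset E ->
        r (X :|: Y) + r (X :&: Y) <= r X + r Y].

Definition simple_matroid (T : finType) (E : {set T}) (r : {set T} -> nat) : Prop :=
  forall x y, x \in E -> y \in E -> r [set x; y] = #|[set x; y]|.

Definition cl (T : finType) (E : {set T}) (r : {set T} -> nat) (X : {set T}) : {set T} :=
  [set x in E | r (x |: X) == r X].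

Definition is_flat (T : finType) (E : {set T}) (r : {set T} -> nat) (F : {set T}) : bool :=
  (F \subset E) && (cl E r F == F).

Definition bot (T : finType) (E : {set T}) (r : {set T} -> nat) : {set T} := cl E r set0.

Definition maxG (T : finType) (G : {set {set T}}) (F : {set T}) : {set {set T}} :=
  [set H in G | (H \subset F) &&
     [forall K in G, (K \subset F) ==> (H \subset K) ==> (K == H)]].

Definition join_fam (T : finType) (E : {set T}) (r : {set T} -> nat)
    (I : {set {set T}}) (x : {set T} -> {set T}) : {set T} :=
  cl E r (\bigcup_(H in I) x H).

(* x is an element of the product of intervals [bot, H], H in I *)
Definition in_prod (T : finType) (E : {set T}) (r : {set T} -> nat)
    (I : {set {set T}}) (x : {set T} -> {set T}) : Prop :=
  forall H : {set T}, H \in I -> is_flat E r (x H) /\ x H \subset H.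

Definition building_set (T : finType) (E : {set T}) (r : {set T} -> nat)
    (G : {set {set T}}) : Prop :=
  (forall H : {set T}, H \in G -> is_flat E r H /\ H != bot E r) /\
  forall F, is_flat E r F -> F != bot E r ->
    let I := maxG G F in
    (forall x, in_prod E r I x -> join_fam E r I x \subset F) /\
    (forall x y, in_prod E r I x -> in_prod E r I y ->
        ((forall H : {set T}, H \in I -> x H \subset y H) <->
         join_fam E r I x \subset join_fam E r I y)) /\
    (forall K : {set T}, is_flat E r K -> K \subset F ->
        exists x, in_prod E r I x /\ join_fam E r I x = K).

(* G \ e := { S flat of M\e : cl_M(S) in G } ; M\e = (E :\ e, r) *)
Definition del_building (T : finType) (E : {set T}) (r : {set T} -> nat)
    (G : {set {set T}}) (e : T) : {set {set T}} :=
  [set S | is_flat (E :\ e) r S & cl E r S \in G].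

From mathcomp Require Import all_boot zify.
Set Implicit Arguments. Unset Strict Implicit. Unset Printing Implicit Defensive.

(* As M is simple, the bottom flat is empty and every singleton is a flat.
   Writing an atom {f} below the join of a family x in the product as the
   join of some z <= x shows that f already lies in some z H: for a building
   set the join of such a family is its union. Consequently, if e is spanned
   by F \ e, it is spanned by H \ e for each maximal H in G below F, since
   otherwise replacing x H by x H \ e would not change the join. For a flat S
   of M \ e and F = cl_M(S) this gives cl_M(H \ e) = H, so the maximal
   elements of G \ e below S are exactly the H \ e, and K |-> cl_M(K),
   K |-> K \ e transport the join isomorphism at F in M to the one at S in
   M \ e. *)

Lemma bigcup_setD1 (T J : finType) (P : {set J}) (A : J -> {set T}) (e : T) :
  \bigcup_(i in P) (A i :\ e) = (\bigcup_(i in P) A i) :\ e.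
Proof.
apply/setP => x; rewrite in_setD1; apply/bigcupP/andP => [[i Pi]|[xe /bigcupP[i Pi xA]]].
  by rewrite in_setD1 => /andP[xe xA]; split=> //; apply/bigcupP; exists i.
by exists i; rewrite ?in_setD1 ?xe.
Qed.

Section Closure.

Variables (T : finType) (E : {set T}) (r : {set T} -> nat).
Implicit Types (X A B : {set T}) (e f : T).

Lemma cl_subset X : cl E r X \subset E.
Proof. by apply/subsetP => x; rewrite inE => /andP[]. Qed.

Lemma subset_cl X : X \subset E -> X \subset cl E r X.
Proof.
move=> XE; apply/subsetP => x xX; rewrite inE (subsetP XE) //=.
by rewrite (setUidPr _) // sub1set.
Qed.

Lemma cl_del e X : cl (E :\ e) r X = cl E r X :\ e.
Proof. by apply/setP => x; rewrite !inE; case: (x == e). Qed.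

Lemma flat_delP e X :
  reflect (X \subset E :\ e /\ cl E r X :\ e = X) (is_flat (E :\ e) r X).
Proof. by rewrite /is_flat cl_del; apply: (iffP andP) => -[XE /eqP]. Qed.

Lemma flat_del_subset e X : is_flat (E :\ e) r X -> X \subset E.
Proof. by case/flat_delP => XE _; apply: subset_trans XE (subsetDl _ _). Qed.

Hypothesis rM : is_matroid E r.

Lemma rank_set0 : r set0 = 0.
Proof. by case: rM => rle _ _; apply/eqP; rewrite -leqn0 -(cards0 T) rle ?sub0set. Qed.

Lemma cl_mono A B : B \subset E -> A \subset B -> cl E r A \subset cl E r B.
Proof.
case: rM => _ mono submod BE AB; apply/subsetP => x; rewrite !inE => /andP[xE /eqP rxA].
rewrite xE /=.
have xAE : x |: A \subset E by rewrite subUset sub1set xE (subset_trans AB).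
have := submod _ _ xAE BE.
rewrite -setUA (setUidPr AB).
have rA : r A <= r ((x |: A) :&: B).
  by apply: mono; rewrite ?subsetI ?subsetUr ?(subset_trans (subsetIr _ _)).
have rB : r B <= r (x |: B) by apply: mono; rewrite ?subsetUr // subUset sub1set xE.
by move=> rxB; apply/eqP; lia.
Qed.

Lemma rank_setU_cl X A : X \subset E -> A \subset cl E r X -> r (X :|: A) = r X.
Proof.
move=> XE; rewrite -[A]set_enum; elim: (enum A) => [|a s IH].
  by rewrite set_nil setU0.
rewrite set_cons subUset sub1set => /andP[aX sX].
have XsE : X :|: [set:: s] \subset E by rewrite subUset XE (subset_trans sX) ?cl_subset.
have : a \in cl E r (X :|: [set:: s]) by apply: subsetP (cl_mono XsE (subsetUl _ _)) _ aX.
by rewrite setUCA inE => /andP[_ /eqP ->]; apply: IH.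
Qed.

Lemma cl_idem X : X \subset E -> cl E r (cl E r X) = cl E r X.
Proof.
move=> XE; apply/eqP; rewrite eqEsubset subset_cl ?cl_subset // andbT.
apply/subsetP => y; rewrite !inE => /andP[yE /eqP ryX]; rewrite yE /=.
have rclX : r (cl E r X) = r X.
  by rewrite -(setUidPr (subset_cl XE)) rank_setU_cl.
case: rM => _ mono _.
have r1 : r X <= r (y |: X) by apply: mono; rewrite ?subsetUr // subUset sub1set yE.
have r2 : r (y |: X) <= r (y |: cl E r X).
  by apply: mono; rewrite ?setUS ?subset_cl // subUset sub1set yE cl_subset.
by apply/eqP; lia.
Qed.

Lemma cl_sub_cl A B : B \subset E -> A \subset cl E r B -> cl E r A \subset cl E r B.
Proof. by move=> BE AB; rewrite -(cl_idem BE); apply: cl_mono AB; apply: cl_subset. Qed.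

Lemma flat_cl X : X \subset E -> is_flat E r (cl E r X).
Proof. by move=> XE; rewrite /is_flat cl_subset cl_idem ?eqxx. Qed.

Lemma cl_bigcup_cl (J : finType) (P : {set J}) (A : J -> {set T}) :
    (forall i, i \in P -> A i \subset E) ->
  cl E r (\bigcup_(i in P) cl E r (A i)) = cl E r (\bigcup_(i in P) A i).
Proof.
move=> AE; have UE : \bigcup_(i in P) A i \subset E by apply/bigcupsP.
apply/eqP; rewrite eqEsubset; apply/andP; split.
  apply: cl_sub_cl => //; apply/bigcupsP => i Pi.
  by apply: cl_mono => //; apply: bigcup_sup.
apply: cl_mono; first by apply/bigcupsP => i _; apply: cl_subset.
by apply/bigcupsP => i Pi; rewrite (bigcup_max i Pi) // subset_cl ?AE.
Qed.

Lemma subset_cl_setD1 e X :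
  X \subset E -> e \in cl E r (X :\ e) -> X \subset cl E r (X :\ e).
Proof.
move=> XE eX; apply/subsetP => x xX; have [-> //|xe] := eqVneq x e.
by apply: subsetP (subset_cl (subset_trans (subsetDl _ _) XE)) _ _; rewrite !inE xe.
Qed.

Lemma flat_cl_setD1 e X : is_flat E r X ->
  (e \in X -> e \in cl E r (X :\ e)) -> cl E r (X :\ e) = X.
Proof.
case/andP => XE /eqP clX eX; apply/eqP.
rewrite eqEsubset -{2}clX cl_mono ?subsetDl //=.
have [/eX|eNX] := boolP (e \in X); first exact: subset_cl_setD1.
by rewrite (setDidPl _) ?subset_cl // disjoint_sym disjoints1.
Qed.

Lemma flat_setD1 e X : is_flat E r X -> e \notin cl E r (X :\ e) ->
  is_flat E r (X :\ e).
Proof.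
case/andP => XE /eqP clX eNcl; have XeE := subset_trans (subsetDl X [set e]) XE.
rewrite /is_flat XeE eqEsubset subset_cl // andbT.
apply/subsetP => x xcl.
have xe : x != e by apply: contraNneq eNcl => xe; rewrite xe in xcl.
by rewrite in_setD1 xe -clX; apply: subsetP (cl_mono XE (subsetDl _ _)) _ xcl.
Qed.

Lemma flat_del_setD1 e X : is_flat E r X -> is_flat (E :\ e) r (X :\ e).
Proof.
case/andP => XE /eqP clX; have XeE := subset_trans (subsetDl X [set e]) XE.
apply/flat_delP; split; first exact: setSD.
apply/eqP; rewrite eqEsubset; apply/andP; split.
  by apply: setSD; rewrite -{2}clX cl_mono ?subsetDl.
apply/subsetP => x /[dup] /setD1P[xe _] xX; rewrite in_setD1 xe /=.
exact: subsetP (subset_cl XeE) _ xX.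
Qed.

Lemma cl_subset_del e A B : A \subset E :\ e -> B \subset E ->
  cl E r A :\ e \subset cl E r B :\ e -> cl E r A \subset cl E r B.
Proof.
move=> AE BE clAB; apply: cl_sub_cl BE _; apply/subsetP => g gA.
have /setD1P[ge _] := subsetP AE g gA.
have : g \in cl E r A :\ e.
  by rewrite in_setD1 ge (subsetP (subset_cl (subset_trans AE (subsetDl _ _)))).
by move/(subsetP clAB)/setD1P => [].
Qed.

Hypothesis rS : simple_matroid E r.

Lemma cl_set1 f : f \in E -> cl E r [set f] = [set f].
Proof.
move=> fE; apply/setP => y; rewrite !inE.
have [yE|yNE] /= := boolP (y \in E); last first.
  by apply/esym/negbTE; apply: contraNneq yNE => ->.
rewrite (rS yE fE); have := rS fE fE; rewrite setUid => ->.
by rewrite cards2 cards1; case: (y == f).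
Qed.

Lemma cl0 : cl E r set0 = set0.
Proof.
apply/setP => y; rewrite !inE setU0 rank_set0.
have [yE|] //= := boolP (y \in E).
by have := rS yE yE; rewrite setUid cards1 => ->.
Qed.

End Closure.

Definition join_iso (T : finType) (E : {set T}) (r : {set T} -> nat)
    (I : {set {set T}}) (F : {set T}) : Prop :=
  (forall x, in_prod E r I x -> join_fam E r I x \subset F) /\
  (forall x y, in_prod E r I x -> in_prod E r I y ->
     ((forall H, H \in I -> x H \subset y H) <->
      join_fam E r I x \subset join_fam E r I y)) /\
  (forall K, is_flat E r K -> K \subset F ->
     exists x, in_prod E r I x /\ join_fam E r I x = K).

Section JoinIso.

Variables (T : finType) (E : {set T}) (r : {set T} -> nat).
Variables (I : {set {set T}}) (F : {set T}).
Hypotheses (rM : is_matroid E r) (rS : simple_matroid E r) (IF : join_iso E r I F).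

Lemma bigcup_in_prod_subset x : in_prod E r I x -> \bigcup_(H in I) x H \subset E.
Proof. by move=> hx; apply/bigcupsP => H /hx[/andP[]]. Qed.

Lemma join_fam_bigcup x : in_prod E r I x -> join_fam E r I x = \bigcup_(H in I) x H.
Proof.
move=> hx; have [join_sub [join_mono join_onto]] := IF.
apply/eqP; rewrite eq_sym eqEsubset subset_cl ?bigcup_in_prod_subset //=.
apply/subsetP => f fx; have fE : f \in E := subsetP (cl_subset _ _ _) f fx.
have [z [hz zf]] : exists z, in_prod E r I z /\ join_fam E r I z = [set f].
  apply: join_onto; first by rewrite /is_flat sub1set fE cl_set1 ?eqxx.
  by rewrite sub1set (subsetP (join_sub x hx)).
have zx : forall H, H \in I -> z H \subset x H.
  by apply/(join_mono z x hz hx); rewrite zf sub1set.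
have : \bigcup_(H in I) z H \subset [set f].
  by rewrite -zf subset_cl ?bigcup_in_prod_subset.
rewrite subset1 => /orP[/eqP zU|/eqP zU0].
  have : f \in \bigcup_(H in I) z H by rewrite zU set11.
  by case/bigcupP => H hH /(subsetP (zx H hH)) fxH; apply/bigcupP; exists H.
by move: zf; rewrite /join_fam zU0 cl0 // => /setP/(_ f); rewrite !inE eqxx.
Qed.

Lemma mem_cl_setD1_component x H0 e : in_prod E r I x -> H0 \in I -> e \in x H0 ->
  e \in cl E r (join_fam E r I x :\ e) -> e \in cl E r (x H0 :\ e).
Proof.
move=> hx hH0 ex ecl; apply/contraT => eNcl; have [_ [join_mono _]] := IF.
pose x' H := if H == H0 then x H0 :\ e else x H.
have hx' : in_prod E r I x'.
  move=> H hH; rewrite /x'; case: eqP => [->|_]; last exact: hx.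
  have [x0flat x0H0] := hx H0 hH0.
  by split; [apply: flat_setD1 | apply: subset_trans (subsetDl _ _) x0H0].
have : join_fam E r I x \subset join_fam E r I x'.
  apply: subset_trans (subset_cl_setD1 (cl_subset _ _ _) ecl) _.
  apply: (cl_mono rM); first exact: bigcup_in_prod_subset hx'.
  rewrite -/(join_fam E r I x) join_fam_bigcup //.
  apply/subsetP => g /setD1P[ge /bigcupP[H hH gH]].
  by apply/bigcupP; exists H; rewrite // /x'; case: eqP => // <-; rewrite !inE ge.
move/(join_mono x x' hx hx')/(_ H0 hH0); rewrite /x' eqxx => /subsetP/(_ e ex).
by rewrite !inE eqxx.
Qed.

Hypotheses (Iflat : forall H, H \in I -> is_flat E r H) (Fflat : is_flat E r F).

Lemma in_prod_id : in_prod E r I id.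
Proof. by move=> H /Iflat. Qed.

Lemma join_fam_id : join_fam E r I id = F.
Proof.
have [join_sub [join_mono join_onto]] := IF.
apply/eqP; rewrite eqEsubset (join_sub _ in_prod_id) /=.
have [z [hz <-]] := join_onto F Fflat (subxx F).
by apply/(join_mono z id hz in_prod_id) => H /hz[].
Qed.

Lemma cl_setD1_component e H : (e \in F -> e \in cl E r (F :\ e)) ->
  H \in I -> cl E r (H :\ e) = H.
Proof.
move=> eF hH; apply: (flat_cl_setD1 rM (Iflat hH)) _ => eH.
apply: (mem_cl_setD1_component in_prod_id hH eH); rewrite join_fam_id; apply: eF.
by rewrite -join_fam_id (join_fam_bigcup in_prod_id); apply/bigcupP; exists H.
Qed.

End JoinIso.

Lemma maxGP (T : finType) (G : {set {set T}}) (F H : {set T}) :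
  reflect [/\ H \in G, H \subset F &
             forall K, K \in G -> K \subset F -> H \subset K -> K = H]
          (H \in maxG G F).
Proof.
rewrite inE; apply: (iffP and3P) => [[HG HF /forallP Hmax] | [HG HF Hmax]].
  by split=> // K KG KF HK; apply/eqP; move: (Hmax K); rewrite KG KF HK.
split=> //; apply/forallP => K; apply/implyP => KG; apply/implyP => KF.
by apply/implyP => HK; rewrite (Hmax K KG KF HK).
Qed.

Lemma maxG_exists (T : finType) (G : {set {set T}}) (F A : {set T}) :
  A \in G -> A \subset F -> exists2 H, H \in maxG G F & A \subset H.
Proof.
move=> AG AF; pose P B := [&& B \in G, A \subset B & B \subset F].
have PA : P A by rewrite /P AG subxx AF.
have [H /and3P[HG AH HF] Hmax] := arg_maxnP (fun B : {set T} => #|B|) PA.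
exists H => //; apply/maxGP; split=> // K KG KF HK; apply/eqP.
by rewrite eq_sym eqEcard HK; apply: Hmax; rewrite /P KG KF (subset_trans AH HK).
Qed.

Section Deletion.

Variables (T : finType) (E : {set T}) (r : {set T} -> nat).
Variables (G : {set {set T}}) (e : T) (S : {set T}).
Hypotheses (rM : is_matroid E r) (rS : simple_matroid E r).
Hypothesis Gflat : forall H, H \in G -> is_flat E r H.
Hypothesis Sflat : is_flat (E :\ e) r S.

Local Notation F := (cl E r S).
Local Notation I := (maxG G F).
Local Notation J := (maxG (del_building E r G e) S).

Hypothesis IF : join_iso E r I F.

Let SE : S \subset E := flat_del_subset Sflat.

Let FeS : F :\ e = S.
Proof. by case/flat_delP: Sflat. Qed.

Lemma maxG_flat H : H \in I -> is_flat E r H.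
Proof. by case/maxGP => /Gflat. Qed.

Lemma cl_setD1_maxG H : H \in I -> cl E r (H :\ e) = H.
Proof.
apply: (cl_setD1_component rM rS IF maxG_flat (flat_cl rM SE)).
by rewrite FeS.
Qed.

Lemma maxG_setD1_del H : H \in I -> H :\ e \in del_building E r G e.
Proof.
by move=> hH; rewrite inE flat_del_setD1 ?maxG_flat ?cl_setD1_maxG //; case/maxGP: hH.
Qed.

Lemma maxG_setD1_sub H : H \in I -> H :\ e \subset S.
Proof. by case/maxGP => _ HF _; rewrite -FeS setSD. Qed.

Lemma maxG_del : J = [set H :\ e | H in I].
Proof.
apply/setP => L; apply/maxGP/imsetP => [[LD LS Lmax] | [H hH ->]].
  move: LD; rewrite inE => /andP[/flat_delP[LE clL] clLG].
  have [H hH clLH] := maxG_exists clLG (cl_mono rM SE LS).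
  exists H => //; apply/esym/Lmax; rewrite ?maxG_setD1_del ?maxG_setD1_sub //.
  by rewrite -clL; apply: setSD.
split; rewrite ?maxG_setD1_del ?maxG_setD1_sub // => K.
rewrite inE => /andP[Kflat clKG] KS HK; have /flat_delP[_ clK] := Kflat.
have KE := flat_del_subset Kflat.
have /maxGP[_ _ Hmax] := hH; rewrite -clK (Hmax (cl E r K)) ?cl_mono //.
by rewrite -(cl_setD1_maxG hH) cl_mono.
Qed.

Lemma join_del y :
  join_fam (E :\ e) r J y = cl E r (\bigcup_(H in I) y (H :\ e)) :\ e.
Proof. by rewrite /join_fam maxG_del big_imset_idem ?cl_del //; apply: setUid. Qed.

Lemma mem_maxG_del H : H \in I -> H :\ e \in J.
Proof. by move=> hH; rewrite maxG_del; apply/imsetP; exists H. Qed.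

Lemma in_prod_del y H : in_prod (E :\ e) r J y -> H \in I ->
  [/\ y (H :\ e) \subset E :\ e, cl E r (y (H :\ e)) :\ e = y (H :\ e)
    & y (H :\ e) \subset H :\ e].
Proof. by move=> hy /mem_maxG_del/hy[/flat_delP[]]. Qed.

Lemma bigcup_in_prod_del y : in_prod (E :\ e) r J y ->
  \bigcup_(H in I) y (H :\ e) \subset E :\ e.
Proof. by move=> hy; apply/bigcupsP => H /(in_prod_del hy)[]. Qed.

Let lift y H := cl E r (y (H :\ e)).

Lemma in_prod_lift y : in_prod (E :\ e) r J y -> in_prod E r I (lift y).
Proof.
move=> hy H hH; have [yE _ yH] := in_prod_del hy hH.
have HE : H \subset E by case/andP: (maxG_flat hH).
split; first by rewrite /lift flat_cl // (subset_trans yE (subsetDl _ _)).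
apply: subset_trans (cl_mono rM (subset_trans (subsetDl _ _) HE) yH) _.
by rewrite cl_setD1_maxG.
Qed.

Lemma join_lift y : in_prod (E :\ e) r J y ->
  join_fam E r I (lift y) = cl E r (\bigcup_(H in I) y (H :\ e)).
Proof.
move=> hy; rewrite /join_fam /lift cl_bigcup_cl // => H /(in_prod_del hy)[yE _ _].
exact: subset_trans yE (subsetDl _ _).
Qed.

Lemma join_del_sub y : in_prod (E :\ e) r J y -> join_fam (E :\ e) r J y \subset S.
Proof.
move=> hy; have [join_sub _] := IF.
have := setSD [set e] (join_sub _ (in_prod_lift hy)).
by rewrite join_del join_lift // FeS.
Qed.

Lemma join_del_mono y y' : in_prod (E :\ e) r J y -> in_prod (E :\ e) r J y' ->
  (forall L, L \in J -> y L \subset y' L) <->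
  join_fam (E :\ e) r J y \subset join_fam (E :\ e) r J y'.
Proof.
move=> hy hy'; have UE' := subset_trans (bigcup_in_prod_del hy') (subsetDl E [set e]).
rewrite !join_del; split => [yy' | clyy' L].
  rewrite setSD // cl_mono //; apply/bigcupsP => H hH.
  by rewrite (bigcup_max H hH) // yy' ?mem_maxG_del.
have [_ [join_mono _]] := IF.
have lift_le := join_mono _ _ (in_prod_lift hy) (in_prod_lift hy').
rewrite !join_lift // in lift_le.
have /lift_le lyy' := cl_subset_del rM (bigcup_in_prod_del hy) UE' clyy'.
rewrite maxG_del => /imsetP[H hH ->].
have [_ <- _] := in_prod_del hy hH; have [_ <- _] := in_prod_del hy' hH.
exact/setSD/lyy'.
Qed.

Lemma join_del_onto K : is_flat (E :\ e) r K -> K \subset S ->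
  exists y, in_prod (E :\ e) r J y /\ join_fam (E :\ e) r J y = K.
Proof.
move=> Kflat KS; have /flat_delP[_ clK] := Kflat; have [_ [_ join_onto]] := IF.
have KE := flat_del_subset Kflat.
have [x [hx xK]] := join_onto _ (flat_cl rM KE) (cl_mono rM SE KS).
exists (fun L => x (cl E r L) :\ e); split.
  move=> L; rewrite maxG_del => /imsetP[H hH ->]; rewrite cl_setD1_maxG //.
  by have [xflat xH] := hx H hH; rewrite flat_del_setD1 ?setSD.
rewrite join_del (eq_bigr _ (fun H hH => congr1 (fun L => x L :\ e) (cl_setD1_maxG hH))).
by rewrite bigcup_setD1 -(join_fam_bigcup rM rS IF hx) xK clK.
Qed.

Lemma join_iso_del : join_iso (E :\ e) r J S.
Proof.
by split; [|split]; [apply: join_del_sub | apply: join_del_mono | apply: join_del_onto].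
Qed.

End Deletion.

Theorem lemma2p24 (T : finType) (E : {set T}) (r : {set T} -> nat)
    (G : {set {set T}}) (e : T) :
  is_matroid E r -> simple_matroid E r -> e \in E ->
  building_set E r G ->
  building_set (E :\ e) r (del_building E r G e).
Proof.
move=> rM rS _ [Gatoms Giso].
have bot_set0 : bot E r = set0 by apply: cl0.
have bot_del : bot (E :\ e) r = set0 by rewrite /bot cl_del (cl0 rM rS) set0D.
have Gflat H : H \in G -> is_flat E r H by case/Gatoms.
split=> [H | S Sflat]; rewrite bot_del.
  rewrite inE => /andP[Hflat clHG]; split=> //; apply: contraTneq clHG => ->.
  by rewrite -/(bot E r) bot_set0; apply/negP => /Gatoms[_]; rewrite bot_set0 eqxx.
move=> S0; have SE := flat_del_subset Sflat.
have clS0 : cl E r S != bot E r.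
  by rewrite bot_set0; apply: contraNneq S0 => clS0; rewrite -subset0 -clS0 subset_cl.
exact: join_iso_del rM rS Gflat Sflat (Giso _ (flat_cl rM SE) clS0).
Qed.
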